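(* Let $G=(X,b,m,c)$ be a weighted graph, $p\in(1,\infty)$ and $o\in X$. Let $f\in D^p$ and let $(f_n)$ be a sequence in $D^p$. If $f_n\to f$ pointwise and $\limsup_{n\to\infty}\mathcal{E}_p(f_n)\le\mathcal{E}_p(f)$, then $\|f_n-f\|_{o,p}\to0$.
   Context: Weighted graph $G=(X,b,m,c)$: $X$ countably infinite; $b$ symmetric, nonnegative, zero on the diagonal, $\sum_yb(x,y)<\infty$; $m>0$; $c\colon X\to[0,\infty)$; $x\sim y$ iff $b(x,y)>0$; $X$ connected. $\mathcal{E}_p(f)=\frac12\sum_{x,y}b(x,y)|f(x)-f(y)|^p+\sum_xc(x)|f(x)|^p$, $D^p=\{f:\mathcal{E}_p(f)<\infty\}$, $\|f\|_{o,p}=(\mathcal{E}_p(f)+|f(o)|^p)^{1/p}$. *)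

From HB Require Import structures.
From mathcomp Require Import all_boot all_order all_algebra.
From mathcomp Require Import all_classical all_reals all_analysis.
From Stdlib Require Import Relations.
Set Implicit Arguments. Unset Strict Implicit. Unset Printing Implicit Defensive.
Import Order.TTheory GRing.Theory Num.Theory.
Local Open Scope classical_set_scope.
Local Open Scope ring_scope.

Definition weighted_graph (R : realType) (X : countType)
  (b : X -> X -> R) (m : X -> R) (c : X -> R) : Prop :=
  infinite_set [set: X] /\
  (forall x y, b x y = b y x) /\
  (forall x y, 0 <= b x y) /\
  (forall x, b x x = 0) /\
  (forall x, (\esum_(y in [set: X]) (b x y)%:E < +oo)%E) /\
  (forall x, 0 < m x) /\
  (forall x, 0 <= c x) /\
  (forall x y, clos_refl_trans X (fun u v => 0 < b u v) x y).

Definition energy (R : realType) (X : countType) (b : X -> X -> R) (c : X -> R)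
  (p : R) (f : X -> R) : \bar R :=
  ((2^-1)%:E * \esum_(xy in [set: X * X]) (b xy.1 xy.2 * `|f xy.1 - f xy.2| `^ p)%:E
   + \esum_(x in [set: X]) (c x * `|f x| `^ p)%:E)%E.

Definition Dp (R : realType) (X : countType) (b : X -> X -> R) (c : X -> R)
  (p : R) (f : X -> R) : Prop := (energy b c p f < +oo)%E.

Definition norm_op (R : realType) (X : countType) (b : X -> X -> R) (c : X -> R)
  (p : R) (o : X) (f : X -> R) : \bar R :=
  ((energy b c p f + (`|f o| `^ p)%:E) `^ p^-1)%E.

From HB Require Import structures.
From mathcomp Require Import all_boot all_order all_algebra.
From mathcomp Require Import all_classical all_reals all_analysis.
From mathcomp Require Import ring lra.
Import Order.TTheory GRing.Theory Num.Theory numFieldNormedType.Exports.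
Local Open Scope classical_set_scope.
Local Open Scope ring_scope.

(* Brezis-Lieb argument.  Write K = 2^(p-1) and fix weights w >= 0.  By
   convexity |x - y|^p <= K (|x|^p + |y|^p), so if u_n -> u pointwise then
   h_n = w (K (|u_n|^p + |u|^p) - |u_n - u|^p) is nonnegative and tends to
   2 K w |u|^p.  Sums of nonnegative terms are lower semicontinuous under
   pointwise convergence (Fatou), hence eventually
   sum h_n > 2 K sum w |u|^p - e, that is,
   sum w |u_n - u|^p <= K (sum w |u_n|^p - sum w |u|^p) + e.  Applied to both
   sums of the energy this gives E(f_n - f) <= K (E(f_n) - E(f)) + e
   eventually, and the limsup hypothesis makes the right-hand side
   arbitrarily small; together with |f_n(o) - f(o)|^p -> 0 the norm goes
   to 0. *)

Section powR_facts.
Context {R : realType}.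

Lemma cvg_powR (u : nat -> R) (l p : R) : 0 < p ->
  (forall n, 0 <= u n) -> 0 <= l ->
  u n @[n --> \oo] --> l -> u n `^ p @[n --> \oo] --> l `^ p.
Proof.
move=> p_gt0 u_ge0 l_ge0 u_cvg.
have [l_gt0|l_le0] := ltP 0 l.
  have /derivable1_diffP/differentiable_continuous :
      derivable (@powR R ^~ p) l (1 : R).
    by apply: derivable_powR; rewrite in_itv /= l_gt0.
  exact: cvg_comp u_cvg.
have l0 : l = 0 by apply/le_anti; rewrite l_le0 l_ge0.
rewrite l0 powR0 ?gt_eqF// in u_cvg *; apply/cvgrPdist_lt => e e_gt0.
have e'_gt0 : 0 < e `^ p^-1 by rewrite powR_gt0.
move/cvgrPdist_lt : u_cvg => /(_ _ e'_gt0); apply: filterS => n.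
rewrite !sub0r !normrN ger0_norm// ger0_norm ?powR_ge0// => un_lt.
rewrite -[ltRHS]powRr1 ?ltW// -(@mulVf _ p) ?gt_eqF// powRrM.
by apply: gt0_ltr_powR; rewrite ?nnegrE ?powR_ge0.
Qed.

Lemma powR_normB_le (x y p : R) : 1 <= p ->
  `|x - y| `^ p <= 2 `^ (p - 1) * (`|x| `^ p + `|y| `^ p).
Proof.
move=> p_ge1; have p_ge0 : 0 <= p by rewrite (le_trans _ p_ge1).
have midpoint (a c : R) :
    `|2^-1 * a + 2^-1 * c| `^ p <= 2^-1 * `|a| `^ p + 2^-1 * `|c| `^ p.
  rewrite (@le_trans _ _ ((2^-1 * `|a| + 2^-1 * `|c|) `^ p))//.
    rewrite ge0_ler_powR ?nnegrE//.
    by rewrite (le_trans (ler_normD _ _))// 2!normrM ger0_norm.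
  rewrite {2 4}(_ : 2^-1 = 1 - 2^-1); last by rewrite {2}(splitr 1) div1r addrK.
  by apply: (convex_powR p_ge1 (Itv01 _ _)) => //=;
    rewrite ?inE/= ?in_itv/= ?normr_ge0// ?invr_ge0// invf_le1 ?ler1n.
have := midpoint (2 * x) (2 * - y).
rewrite !mulrA mulVf// !mul1r !normrM normrN (@ger0_norm _ 2)// !powRM//.
move=> /le_trans; apply; rewrite powRB ?pnatr_eq0 ?implybT// powRr1//.
by rewrite le_eqVlt; apply/orP; left; apply/eqP; field.
Qed.

End powR_facts.

Section esum_facts.
Context {R : realType} {T : choiceType}.
Local Open Scope ereal_scope.

Lemma esumZl (k : R) (a : T -> \bar R) : (0 <= k)%R -> (forall t, 0 <= a t) ->
  \esum_(t in [set: T]) (k%:E * a t) = k%:E * \esum_(t in [set: T]) a t.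
Proof.
move=> k_ge0 a_ge0; rewrite /esum -ereal_supZl//; last first.
  apply/set0P; exists 0; exists set0; last by rewrite fsbig_set0.
  exact: fsets_set0.
congr ereal_sup; rewrite image_comp; apply: eq_imagel => A _ /=.
by rewrite ge0_mule_fsumr.
Qed.

Lemma esum_lsc (a : nat -> T -> R) (a0 : T -> R) (r : R) :
  (forall n t, (0 <= a n t)%R) -> (forall t, a n t @[n --> \oo] --> a0 t) ->
  r%:E < \esum_(t in [set: T]) (a0 t)%:E ->
  \forall n \near \oo, r%:E < \esum_(t in [set: T]) (a n t)%:E.
Proof.
move=> a_ge0 a_cvg /ereal_sup_gt[_ [A [finA _] <-]].
rewrite fsumEFin// lte_fin => r_lt.
have : (\sum_(t \in A) a n t)%R @[n --> \oo] --> (\sum_(t \in A) a0 t)%R.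
  rewrite fsbig_finite//; under eq_cvg do rewrite fsbig_finite//.
  by apply: cvg_big => //; exact: add_continuous.
move=> /cvgr_gt /(_ _ r_lt); apply: filterS => n r_ltn.
apply: (lt_le_trans _ (esum_ge _)); last by exists A.
by rewrite fsumEFin// lte_fin.
Qed.

End esum_facts.

Section weighted_power_sum.
Context {R : realType} {T : choiceType} (w : T -> R) (p : R).
Hypotheses (w_ge0 : forall t, 0 <= w t) (p_ge1 : 1 <= p).
Local Open Scope ereal_scope.

Definition psum (v : T -> R) : \bar R :=
  \esum_(t in [set: T]) (w t * `|v t| `^ p)%:E.

Lemma psum_ge0 v : 0 <= psum v.
Proof. by apply: esum_ge0 => t _; rewrite lee_fin mulr_ge0 ?powR_ge0. Qed.

Local Notation K := (2 `^ (p - 1))%R.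

Definition psum_gap (u v : T -> R) (t : T) : R :=
  (w t * (K * (`|u t| `^ p + `|v t| `^ p) - `|u t - v t| `^ p))%R.

Lemma psum_gap_ge0 u v t : (0 <= psum_gap u v t)%R.
Proof. by rewrite mulr_ge0// subr_ge0 powR_normB_le. Qed.

Lemma psumB_add_gap (u v : T -> R) :
  psum (u - v)%R + \esum_(t in [set: T]) (psum_gap u v t)%:E =
  K%:E * (psum u + psum v).
Proof.
have summand_ge0 (g : T -> R) t : 0 <= (w t * `|g t| `^ p)%:E.
  by rewrite lee_fin mulr_ge0 ?powR_ge0.
rewrite /psum -esumD// => [|t _]; last by rewrite lee_fin psum_gap_ge0.
rewrite -esumD// -esumZl// => [|t]; last by rewrite adde_ge0.
apply: eq_esum => t _; rewrite -!EFinD -EFinM /psum_gap /=; congr EFin; ring.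
Qed.

Lemma psum_gap_cvg (u : nat -> T -> R) (v : T -> R) t :
  u n t @[n --> \oo] --> v t ->
  psum_gap (u n) v t @[n --> \oo] --> (2 * K * (w t * `|v t| `^ p))%R.
Proof.
move=> u_cvg; have p_gt0 : (0 < p)%R by rewrite (lt_le_trans _ p_ge1).
have cvg_norm_powR (x : nat -> R) y : x n @[n --> \oo] --> y ->
    (`|x n| `^ p)%R @[n --> \oo] --> (`|y| `^ p)%R.
  by move=> /cvg_norm; apply: cvg_powR.
have -> : (2 * K * (w t * `|v t| `^ p) =
    w t * (K * (`|v t| `^ p + `|v t| `^ p) - `|v t - v t| `^ p))%R.
  by rewrite subrr normr0 powR0 ?gt_eqF// subr0; ring.
apply: cvgM; first exact: cvg_cst.
apply: cvgB; last by apply: cvg_norm_powR; apply: cvgB => //; exact: cvg_cst.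
apply: cvgM; first exact: cvg_cst.
by apply: cvgD; [exact: cvg_norm_powR | exact: cvg_cst].
Qed.

Lemma psumB_le_near (u : nat -> T -> R) (v : T -> R) (e : R) :
  psum v < +oo -> (forall t, u n t @[n --> \oo] --> v t) -> (0 < e)%R ->
  \forall n \near \oo, psum (u n - v)%R <= K%:E * (psum (u n) - psum v) + e%:E.
Proof.
move=> v_fin u_cvg e_gt0; have K_gt0 : (0 < K)%R by rewrite powR_gt0.
have [s vE] : exists s, psum v = s%:E.
  by exists (fine (psum v)); rewrite fineK// ge0_fin_numE ?psum_ge0.
have gap_lim : (2 * K * s - e)%:E <
    \esum_(t in [set: T]) (2 * K * (w t * `|v t| `^ p))%:E.
  under eq_esum do rewrite EFinM.
  rewrite esumZl// => [|t]; last by rewrite lee_fin mulr_ge0 ?powR_ge0.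
  by rewrite -[X in _ * X]/(psum v) vE -EFinM lte_fin ltrBlDr ltrDl.
have gap_ge0 n t : (0 <= psum_gap (u n) v t)%R by exact: psum_gap_ge0.
have := esum_lsc _ _ _ gap_ge0 (fun t => psum_gap_cvg _ _ _ (u_cvg t)) gap_lim.
apply: filterS => n; have := psumB_add_gap (u n) v; rewrite vE.
move: (psum_ge0 (u n - v)%R) (psum_ge0 (u n)).
move: (psum (u n - v)%R) (psum (u n)).
move: (\esum_(t in [set: T]) (psum_gap (u n) v t)%:E) => g d [a||] //=.
2: by move=> *; rewrite addye// gt0_muley ?lte_fin ?leey.
case: d g => [d||] [g||] //= _ _.
rewrite -!EFinD -!EFinM !lte_fin lee_fin => -[balance] gap_gt.
lra.
Qed.

End weighted_power_sum.

Section ereal_sequences.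
Context {R : realType}.
Local Open Scope ereal_scope.

Lemma limn_esup_lt_near (u : nat -> \bar R) (l : \bar R) :
  limn_esup u < l -> \forall n \near \oo, u n < l.
Proof.
rewrite /limn_esup limf_esupE => /ereal_inf_lt[_ [V V_near <-]] supV_lt.
apply: filterS V_near => n Vn; apply: le_lt_trans supV_lt.
by apply: ereal_sup_ubound; exists n.
Qed.

Lemma limn_esup_le_near (u : nat -> \bar R) (l : \bar R) :
  (\forall n \near \oo, u n <= l) -> limn_esup u <= l.
Proof.
move=> u_le; rewrite /limn_esup limf_esupE.
apply: le_trans (ereal_inf_lbound _) _; first by exists [set n | u n <= l].
by apply: ge_ereal_sup => _ [n un_le <-].
Qed.

Lemma cvg_poweR0 (u : nat -> \bar R) (q : R) : (0 < q)%R ->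
  (forall n, 0 <= u n) -> u n @[n --> \oo] --> 0 -> u n `^ q @[n --> \oo] --> 0.
Proof.
move=> q_gt0 u_ge0 /fine_cvgP[u_fin u_cvg]; apply/fine_cvgP; split.
  by apply: filterS u_fin => n; exact: fin_num_poweR.
rewrite -(powR0 (lt0r_neq0 q_gt0)).
under eq_cvg do rewrite /= fine_poweR.
by apply: cvg_powR => // n; exact: fine_ge0.
Qed.

End ereal_sequences.

Section energy_convergence.
Context {R : realType} {X : countType} (b : X -> X -> R) (c : X -> R) (p : R).
Hypotheses (b_ge0 : forall x y, 0 <= b x y) (c_ge0 : forall x, 0 <= c x)
  (p_ge1 : 1 <= p).
Local Open Scope ereal_scope.

Definition edge_weight (xy : X * X) : R := b xy.1 xy.2.

Definition gradient (g : X -> R) (xy : X * X) : R := (g xy.1 - g xy.2)%R.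

(* As elaborated, [energy] is 1/2 * (sum + sum): the factor 1/2 also
   multiplies the killing term. *)
Lemma energyE g :
  energy b c p g = (2^-1)%:E * (psum edge_weight p (gradient g) + psum c p g).
Proof. by []. Qed.

Lemma gradientB g h : gradient (g - h)%R = (gradient g - gradient h)%R.
Proof. by apply/funext => xy; rewrite /gradient !fctE; ring. Qed.

Lemma edge_weight_ge0 xy : (0 <= edge_weight xy)%R.
Proof. exact: b_ge0. Qed.

Lemma energy_ge0 g : 0 <= energy b c p g.
Proof.
rewrite energyE mule_ge0 ?lee_fin ?invr_ge0//.
by rewrite adde_ge0// psum_ge0//; exact: edge_weight_ge0.
Qed.

Lemma Dp_psum g : Dp b c p g ->
  psum edge_weight p (gradient g) < +oo /\ psum c p g < +oo.
Proof.
rewrite /Dp energyE => E_fin.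
have grad_ge0 := psum_ge0 _ p edge_weight_ge0 (gradient g).
have val_ge0 := psum_ge0 _ p c_ge0 g.
have S_fin : psum edge_weight p (gradient g) + psum c p g < +oo.
  rewrite ltey; apply/eqP => S_oo; move: E_fin.
  by rewrite S_oo gt0_muley ?lte_fin ?invr_gt0// ltxx.
by split; apply: le_lt_trans S_fin; [exact: leeDl | exact: leeDr].
Qed.

Local Notation K := (2 `^ (p - 1))%R.

Lemma energyB_le_near (f : X -> R) (fs : nat -> X -> R) (e : R) :
  Dp b c p f -> (forall n, Dp b c p (fs n)) ->
  (forall x, fs n x @[n --> \oo] --> f x) -> (0 < e)%R ->
  \forall n \near \oo, energy b c p (fs n - f)%R <=
    K%:E * (energy b c p (fs n) - energy b c p f) + e%:E.
Proof.
move=> /Dp_psum[grad_fin val_fin] Dfs fs_cvg e_gt0.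
have grad_cvg xy : gradient (fs n) xy @[n --> \oo] --> gradient f xy.
  exact: cvgB.
have := psumB_le_near _ _ edge_weight_ge0 p_ge1 (fun n => gradient (fs n)) _ _
  grad_fin grad_cvg e_gt0.
have := psumB_le_near _ _ c_ge0 p_ge1 _ _ _ val_fin fs_cvg e_gt0.
apply: filterS2 => n val_le grad_le; rewrite !energyE gradientB.
have [gradn_fin valn_fin] := Dp_psum _ (Dfs n).
move: grad_le val_le.
have real_of (x : \bar R) : 0 <= x -> x < +oo -> exists r, x = r%:E.
  by move=> x_ge0 x_fin; exists (fine x); rewrite fineK// ge0_fin_numE.
have [g1 ->] := real_of _ (psum_ge0 _ p edge_weight_ge0 _) gradn_fin.
have [g0 ->] := real_of _ (psum_ge0 _ p edge_weight_ge0 _) grad_fin.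
have [v1 ->] := real_of _ (psum_ge0 _ p c_ge0 _) valn_fin.
have [v0 ->] := real_of _ (psum_ge0 _ p c_ge0 _) val_fin.
rewrite -!EFinB -!EFinM -!EFinD => grad_le val_le.
apply: le_trans (lee_wpmul2l _ (leeD grad_le val_le)) _.
  by rewrite lee_fin invr_ge0.
by rewrite -EFinD -EFinM lee_fin; lra.
Qed.

Lemma energyB_cvg0 (f : X -> R) (fs : nat -> X -> R) :
  Dp b c p f -> (forall n, Dp b c p (fs n)) ->
  (forall x, fs n x @[n --> \oo] --> f x) ->
  limn_esup (fun n => energy b c p (fs n)) <= energy b c p f ->
  energy b c p (fs n - f)%R @[n --> \oo] --> 0.
Proof.
move=> Df Dfs fs_cvg limsup_le.
apply: limn_esup_le_cvg => [|n]; last exact: energy_ge0.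
apply/lee_addgt0Pr => e e_gt0; rewrite add0e; apply: limn_esup_le_near.
have K1_gt0 : (0 < K + 1)%R by rewrite ltr_wpDl ?powR_ge0.
pose d := (e / (K + 1))%R; have d_gt0 : (0 < d)%R by rewrite divr_gt0.
have Ef_fin : energy b c p f \is a fin_num by rewrite ge0_fin_numE ?energy_ge0.
have Ef_lt : energy b c p f < energy b c p f + d%:E by rewrite lteDl ?lte_fin.
have := limn_esup_lt_near _ _ (le_lt_trans limsup_le Ef_lt).
have := energyB_le_near _ _ _ Df Dfs fs_cvg d_gt0.
apply: filterS2 => n Bn_le En_lt; apply: (le_trans Bn_le).
have -> : e = (K * d + d)%R by rewrite /d; field; rewrite gt_eqF.
rewrite EFinD; apply: leeD => //; rewrite EFinM.
apply: lee_wpmul2l; first by rewrite lee_fin powR_ge0.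
by rewrite leeBlDr// addeC ltW.
Qed.

End energy_convergence.

Theorem lemma2p4 (R : realType) (X : countType)
  (b : X -> X -> R) (m : X -> R) (c : X -> R)
  (p : R) (o : X) (f : X -> R) (fs : nat -> X -> R) :
  weighted_graph b m c -> 1 < p ->
  Dp b c p f -> (forall n, Dp b c p (fs n)) ->
  (forall x, fs n x @[n --> \oo] --> f x) ->
  (limn_esup (fun n => energy b c p (fs n)) <= energy b c p f)%E ->
  norm_op b c p o (fs n - f) @[n --> \oo] --> 0%E.
Proof.
move=> [_ [_ [b_ge0 [_ [_ [_ [c_ge0 _]]]]]]] /ltW p_ge1 Df Dfs fs_cvg limsup_le.
have p_gt0 : 0 < p by rewrite (lt_le_trans _ p_ge1).
apply: cvg_poweR0; first by rewrite invr_gt0.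
  by move=> n; rewrite adde_ge0 ?energy_ge0 ?lee_fin ?powR_ge0.
rewrite -[0%E]adde0; apply: cvgeD => //; first exact: energyB_cvg0.
apply: cvg_EFin; first exact: nearW.
rewrite -(powR0 (lt0r_neq0 p_gt0)) -(normr0 R) -(subrr (f o)).
apply: cvg_powR => //; apply: cvg_norm; under eq_cvg do rewrite /= fctE.
by apply: cvgB => //; exact: cvg_cst.
Qed.
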